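(* Let $X$ and $Y$ be linear spaces and let $f:X\to Y$ be a mapping. Then $f$ is additive, i.e. $f(x+y)=f(x)+f(y)$ for all $x,y\in X$, if and only if $$3f(x+3y)-f(3x+y)=12[f(x+y)+f(x-y)]-24f(x)+8f(y)$$ for all $x,y\in X$. *)

From mathcomp Require Import all_boot all_order all_algebra.
Set Implicit Arguments. Unset Strict Implicit. Unset Printing Implicit Defensive.
Import Order.TTheory GRing.Theory Num.Theory.

(* Special values of the equation give f 0 = 0, oddness, f (2x) = 2 f x and
   f (3x) = 3 f x.  Adding the equation to three times its (y, x) instance
   expresses f (x + 3y) through f (x + y), f (x - y) and f x; applying this at
   (x - y, y) and (x + y, -y) and eliminating f (x - 2y) gives
   f (x + 2y) = 3 f (x + y) + f (x - y) - 3 f x.  Instantiated at (2x, y),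
   (y, x) and (-y, x) this finally yields 6 f (x + y) = 6 f x + 6 f y.  The
   integer factors can be cancelled because Y is a vector space over a field
   of characteristic 0. *)
From mathcomp Require Import all_boot all_order all_algebra.
Import Order.TTheory GRing.Theory Num.Theory.
Local Open Scope ring_scope.

(* A reflexive decision procedure for identities between Z-linear
   combinations of atoms in a Z-module: both sides are reified and
   compared through their integer coefficient lists. *)
Inductive zexpr :=
  | ZAtom of nat | ZZero | ZAdd of zexpr & zexpr | ZOpp of zexpr
  | ZMuln of zexpr & nat | ZMulz of zexpr & int.

Section ZmodLinearIdentities.
Variable V : zmodType.

Fixpoint zeval (s : seq V) e : V :=
  match e with
  | ZAtom i => s`_i
  | ZZero => 0
  | ZAdd a b => zeval s a + zeval s b
  | ZOpp a => - zeval s a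
  | ZMuln a n => zeval s a *+ n
  | ZMulz a z => zeval s a *~ z
  end.

Fixpoint coef_add (c d : seq int) : seq int :=
  match c, d with
  | [::], _ => d
  | _, [::] => c
  | x :: c', y :: d' => (x + y) :: coef_add c' d'
  end.

Fixpoint zcoef e : seq int :=
  match e with
  | ZAtom i => rcons (nseq i 0) 1
  | ZZero => [::]
  | ZAdd a b => coef_add (zcoef a) (zcoef b)
  | ZOpp a => map -%R (zcoef a)
  | ZMuln a n => map ( *%R^~ n%:Z) (zcoef a)
  | ZMulz a z => map ( *%R^~ z) (zcoef a)
  end.

Fixpoint lincomb (s : seq V) (c : seq int) : V :=
  if c is x :: c' then head 0 s *~ x + lincomb (behead s) c' else 0.

Lemma lincomb_add s c d : lincomb s (coef_add c d) = lincomb s c + lincomb s d.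
Proof.
elim: c s d => [|x c IHc] s [|y d] /=; rewrite ?add0r ?addr0 //.
by rewrite IHc mulrzDr addrACA.
Qed.

Lemma lincomb_opp s c : lincomb s (map -%R c) = - lincomb s c.
Proof. by elim: c s => [|x c IHc] s /=; rewrite ?oppr0 // IHc opprD mulrNz. Qed.

Lemma lincomb_mulz s c z : lincomb s (map ( *%R^~ z) c) = lincomb s c *~ z.
Proof. by elim: c s => [|x c IHc] s /=; rewrite ?mul0rz // IHc mulrzA mulrzDl. Qed.

Lemma lincomb_atom s i : lincomb s (rcons (nseq i 0) 1) = s`_i.
Proof.
elim: i s => [|i IHi] s /=; first by rewrite mulr1z addr0 nth0.
by rewrite IHi mulr0z add0r nth_behead.
Qed.

Lemma zeval_lincomb s e : zeval s e = lincomb s (zcoef e).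
Proof.
elim: e => [i||a IHa b IHb|a IHa|a IHa n|a IHa z] /=.
- by rewrite lincomb_atom.
- by [].
- by rewrite lincomb_add IHa IHb.
- by rewrite lincomb_opp IHa.
- by rewrite lincomb_mulz IHa.
- by rewrite lincomb_mulz IHa.
Qed.

Lemma lincomb_eq0 s c : all (eq_op^~ 0) c -> lincomb s c = 0.
Proof.
by elim: c s => [|x c IHc] s //= /andP[/eqP-> /IHc->]; rewrite mulr0z add0r.
Qed.

Lemma zeval_eq s e1 e2 :
  all (eq_op^~ 0) (coef_add (zcoef e1) (map -%R (zcoef e2))) ->
  zeval s e1 = zeval s e2.
Proof.
move/(lincomb_eq0 s); rewrite lincomb_add lincomb_opp -!zeval_lincomb.
by move/eqP; rewrite subr_eq0 => /eqP.
Qed.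

Lemma lincomb1_eq (L R L1 R1 : V) k1 :
  L1 = R1 -> L - R = (L1 - R1) *~ k1 -> L = R.
Proof. by move=> ->; rewrite subrr mul0rz => /eqP; rewrite subr_eq0 => /eqP. Qed.

Lemma lincomb2_eq (L R L1 R1 L2 R2 : V) k1 k2 :
  L1 = R1 -> L2 = R2 -> L - R = (L1 - R1) *~ k1 + (L2 - R2) *~ k2 -> L = R.
Proof.
by move=> -> ->; rewrite !subrr !mul0rz addr0 => /eqP; rewrite subr_eq0 => /eqP.
Qed.

Lemma lincomb3_eq (L R L1 R1 L2 R2 L3 R3 : V) k1 k2 k3 :
  L1 = R1 -> L2 = R2 -> L3 = R3 ->
  L - R = (L1 - R1) *~ k1 + (L2 - R2) *~ k2 + (L3 - R3) *~ k3 -> L = R.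
Proof.
move=> -> -> ->; rewrite !subrr !mul0rz !addr0.
by move/eqP; rewrite subr_eq0 => /eqP.
Qed.

End ZmodLinearIdentities.

Arguments zeval {V}.
Arguments lincomb1_eq {V L R L1 R1} k1.
Arguments lincomb2_eq {V L R L1 R1 L2 R2} k1 k2.
Arguments lincomb3_eq {V L R L1 R1 L2 R2 L3 R3} k1 k2 k3.

Ltac zconvertible u t :=
  constr:(ltac:(tryif unify u t then exact true else exact false)).

Ltac zinsert t l :=
  lazymatch l with
  | [::] => constr:([:: t])
  | ?u :: ?l' =>
      let b := zconvertible u t in
      lazymatch b with
      | true => l
      | false => let l'' := zinsert t l' in constr:(u :: l'')
      end
  end.

Ltac zindex t l :=
  lazymatch l with
  | ?u :: ?l' =>
      let b := zconvertible u t in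
      lazymatch b with
      | true => constr:(0%N)
      | false => let n := zindex t l' in constr:(n.+1)
      end
  end.

Ltac zatoms t l :=
  lazymatch t with
  | @GRing.add _ ?a ?b => let l' := zatoms a l in zatoms b l'
  | @GRing.opp _ ?a => zatoms a l
  | @GRing.natmul _ ?a _ => zatoms a l
  | @intmul _ ?a _ => zatoms a l
  | @GRing.zero _ => l
  | _ => zinsert t l
  end.

Ltac zreify t l :=
  lazymatch t with
  | @GRing.add _ ?a ?b =>
      let x := zreify a l in let y := zreify b l in constr:(ZAdd x y)
  | @GRing.opp _ ?a => let x := zreify a l in constr:(ZOpp x)
  | @GRing.natmul _ ?a ?n => let x := zreify a l in constr:(ZMuln x n)
  | @intmul _ ?a ?z => let x := zreify a l in constr:(ZMulz x z)
  | @GRing.zero _ => constr:(ZZero)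
  | _ => let i := zindex t l in constr:(ZAtom i)
  end.

Ltac zmod_lin :=
  lazymatch goal with |- @eq ?T ?L ?R =>
    let l := zatoms L (@nil T) in let l := zatoms R l in
    let eL := zreify L l in let eR := zreify R l in
    change (zeval l eL = zeval l eR); apply: zeval_eq; vm_compute; reflexivity
  end.

Lemma lmod_natmulI (K : numFieldType) (V : lmodType K) n {v w : V} :
  (0 < n)%N -> v *+ n = w *+ n -> v = w.
Proof.
move=> n_gt0 /(congr1 ( *:%R (n%:R^-1 : K))).
have n_neq0 : (n%:R : K) != 0 by rewrite pnatr_eq0 -lt0n.
by rewrite -!scaler_nat !scalerA mulVf // !scale1r.
Qed.

Section AdditiveSolves.
Variables (X Y : zmodType) (f : X -> Y).
Hypothesis fD : forall x y, f (x + y) = f x + f y.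

Lemma additive_f0 : f 0 = 0.
Proof. by apply: (addrI (f 0)); rewrite -fD !addr0. Qed.

Lemma additive_fN x : f (- x) = - f x.
Proof. by apply/eqP; rewrite -addr_eq0 -fD addNr additive_f0. Qed.

Lemma additive_funeq x y :
  f (x + y *+ 3) *+ 3 - f (x *+ 3 + y)
  = (f (x + y) + f (x - y)) *+ 12 - f x *+ 24 + f y *+ 8.
Proof. by rewrite !fD additive_fN; zmod_lin. Qed.

End AdditiveSolves.

Section FunEqAdditive.
Variables (K : numFieldType) (X : zmodType) (Y : lmodType K) (f : X -> Y).
Hypothesis f_funeq : forall x y,
  f (x + y *+ 3) *+ 3 - f (x *+ 3 + y)
  = (f (x + y) + f (x - y)) *+ 12 - f x *+ 24 + f y *+ 8.

Lemma funeq_f0 : f 0 = 0.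
Proof.
have := f_funeq 0 0; rewrite mul0rn !addr0 subr0 => h.
by apply: (@lmod_natmulI K Y 6) => //; apply: (lincomb1_eq (-1) h); zmod_lin.
Qed.

Lemma funeq_fMn3 x : f (x *+ 3) = f x *+ 3.
Proof.
have := f_funeq x 0; rewrite mul0rn !addr0 subr0 funeq_f0 => h.
by apply: (lincomb1_eq (-1) h); zmod_lin.
Qed.

Lemma funeq_fN x : f (- x) = - f x.
Proof.
have := f_funeq 0 x; rewrite mul0rn !add0r funeq_f0 funeq_fMn3 => h.
apply: (@lmod_natmulI K Y 12) => //.
by apply: (lincomb1_eq (-1) h); zmod_lin.
Qed.

Lemma funeq_fMn2 x : f (x *+ 2) = f x *+ 2.
Proof.
have := f_funeq x (- x).
rewrite (_ : x + (- x) *+ 3 = - (x *+ 2)); last by zmod_lin.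
rewrite (_ : x *+ 3 - x = x *+ 2); last by zmod_lin.
rewrite subrr opprK -mulr2n !funeq_fN funeq_f0 => h.
apply: (@lmod_natmulI K Y 16) => //.
by apply: (lincomb1_eq (-1) h); zmod_lin.
Qed.

Lemma funeq_shift3 x y :
  f (x + y *+ 3) = f (x + y) *+ 6 + f (x - y) *+ 3 - f x *+ 8.
Proof.
have h1 := f_funeq x y; have := f_funeq y x.
rewrite [y + x *+ 3]addrC [y *+ 3 + x]addrC [y + x]addrC -[y - x]opprB funeq_fN => h2.
apply: (@lmod_natmulI K Y 8) => //.
by apply: (lincomb2_eq 3 1 h1 h2); zmod_lin.
Qed.

Lemma funeq_shift2 x y :
  f (x + y *+ 2) = f (x + y) *+ 3 + f (x - y) - f x *+ 3.
Proof.
have := funeq_shift3 (x - y) y.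
rewrite (_ : x - y + y *+ 3 = x + y *+ 2); last by zmod_lin.
rewrite subrK (_ : x - y - y = x - y *+ 2); last by zmod_lin.
move=> h1.
have := funeq_shift3 (x + y) (- y).
rewrite (_ : x + y + (- y) *+ 3 = x - y *+ 2); last by zmod_lin.
rewrite addrK (_ : x + y - - y = x + y *+ 2); last by zmod_lin.
move=> h2.
apply: (@lmod_natmulI K Y 8) => //.
by apply: (lincomb2_eq (-1) (-3) h1 h2); zmod_lin.
Qed.

Lemma funeq_additive x y : f (x + y) = f x + f y.
Proof.
have := funeq_shift2 y x.
rewrite [y + _]addrC [y + x]addrC -[y - x]opprB funeq_fN => h1.
have := funeq_shift2 (- y) x.
rewrite ![- y + _]addrC -opprD !funeq_fN => h2.
have := funeq_shift2 (x *+ 2) y.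
rewrite -mulrnDl !funeq_fMn2 => h3.
apply: (@lmod_natmulI K Y 6) => //.
by apply: (lincomb3_eq (-1) (-3) (-1) h3 h1 h2); zmod_lin.
Qed.

End FunEqAdditive.

Theorem lemma2p1 (K : numFieldType) (X Y : lmodType K) (f : X -> Y) :
  (forall x y : X, f (x + y) = f x + f y) <->
  (forall x y : X,
     f (x + y *+ 3) *+ 3 - f (x *+ 3 + y)
     = (f (x + y) + f (x - y)) *+ 12 - f x *+ 24 + f y *+ 8).
Proof.
split; [exact: additive_funeq | exact: funeq_additive].
Qed.
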